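(* Let $r,s$ be positive integers, let $k=2^{8}r^{2}$ and let $c\ge 8rs\binom{k}{r}$. Let $M$ be an $n\times n$ zero-one matrix such that $k\mid n$ and $w(M)\ge cn^{3/2}$. Then either (i) $M$ contains an $\frac nk\times\frac nk$ matrix $N$ with $w(N)\ge 2c\left(\frac nk\right)^{3/2}$, or (ii) for some positive integer $m$, $M$ contains an $\frac{nr}{k}\times m$ matrix $N$ that is $r$-balanced and satisfies $w(N)\ge rs\sqrt{m}\left(\frac{nr}{k}\right)$.
   Context: $w(M)$ is the number of $1$-entries of $M$; $M$ contains $N$ if one can delete some rows and columns of $M$ and turn some $1$-entries into $0$-entries so that the result is $N$. An $a\times m$ zero-one matrix $N$ is $r$-balanced if $r\mid a$ and for every column $c\in[m]$ the number of $1$-entries among $N((i-1)\frac ar+1,c),\dots,N(i\frac ar,c)$ is the same for all $i\in[r]$. *)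

From HB Require Import structures.
From mathcomp Require Import all_boot all_order all_algebra.
From mathcomp Require Import reals.
Set Implicit Arguments. Unset Strict Implicit. Unset Printing Implicit Defensive.
Import Order.TTheory GRing.Theory Num.Theory.

Definition weight (p q : nat) (M : 'M[bool]_(p, q)) : nat :=
  #|[set ij : 'I_p * 'I_q | M ij.1 ij.2]|.

(* M contains N: delete some rows and columns of M (keeping the order of the
   remaining ones) and turn some 1-entries into 0-entries to obtain N. *)
Definition contains (p q a b : nat) (M : 'M[bool]_(p, q)) (N : 'M[bool]_(a, b)) : Prop :=
  exists (f : 'I_a -> 'I_p) (g : 'I_b -> 'I_q),
    (forall i j : 'I_a, (i < j)%N -> (f i < f j)%N) /\
    (forall i j : 'I_b, (i < j)%N -> (g i < g j)%N) /\
    (forall (i : 'I_a) (j : 'I_b), N i j -> M (f i) (g j)).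

Definition block_count (a m : nat) (N : 'M[bool]_(a, m)) (r i : nat) (c : 'I_m) : nat :=
  #|[set x : 'I_a | (i * (a %/ r) <= x < i.+1 * (a %/ r))%N & N x c]|.

Definition balanced (r a m : nat) (N : 'M[bool]_(a, m)) : Prop :=
  (r %| a)%N /\
  forall (c : 'I_m) (i j : nat), (i < r)%N -> (j < r)%N ->
    block_count N r i c = block_count N r j c.

(* Write n = k a and cut the rows of M into k blocks of a consecutive rows; let
   D i y be the number of ones of column y inside block i.  If some block has a
   columns carrying 2 c a^(3/2) ones, they form the square submatrix of (i).
   Otherwise, in each block the columns with D i y >= 2 c sqrt a carry less than
   2 c a^(3/2) ones.  With t = floor (c sqrt a / 32 r), call a column rich when
   D i y >= t for at least r blocks i: splitting w(M) = sum D i y along the two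
   thresholds shows that at least 2 r a columns are rich.  By pigeonhole, some r
   blocks S are shared by a set F of at least 2 r a / C(k, r) rich columns, and
   keeping only the first t ones of every column of F inside every block of S
   gives an r-balanced matrix of weight r t |F|, which is large enough for (ii). *)

From HB Require Import structures.
From mathcomp Require Import all_boot all_order all_algebra.
From mathcomp Require Import reals.
From mathcomp Require Import zify.
From mathcomp.algebra_tactics Require Import ring lra.
Set Implicit Arguments. Unset Strict Implicit. Unset Printing Implicit Defensive.
Import Order.TTheory GRing.Theory Num.Theory.

Lemma exists_card_between (T : finType) (A B : {set T}) j :
  A \subset B -> (#|A| <= j <= #|B|)%N ->
  exists C : {set T}, [/\ A \subset C, C \subset B & #|C| = j].
Proof.
move=> sAB /andP[leAj lejB].
have /card_geqP[s [s_uniq s_size sBA]] : (j - #|A| <= #|B :\: A|)%N.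
  by rewrite cardsD (setIidPr sAB); lia.
have disj : A :&: [set x in s] = set0.
  by apply/setP=> x; rewrite !inE; apply/andP=> -[xA /sBA]; rewrite inE xA.
exists (A :|: [set x in s]); split.
- exact: subsetUl.
- by rewrite subUset sAB; apply/subsetP=> x; rewrite inE => /sBA /setDP[].
- by rewrite cardsU disj cards0 subn0 cardsE (card_uniqP s_uniq) s_size; lia.
Qed.

Lemma exists_common_subset (T U : finType) (G : {set T}) (B : T -> {set U}) r :
  (r <= #|U|)%N -> {in G, forall x, r <= #|B x|}%N ->
  exists2 S : {set U}, #|S| = r &
    (#|G| <= #|[set x in G | S \subset B x]| * 'C(#|U|, r))%N.
Proof.
move=> rU rich; set Rs := [set S : {set U} | #|S| == r].
pose f (S : {set U}) := #|[set x in G | S \subset B x]|.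
have Rs_gt0 : (0 < #|Rs|)%N by rewrite card_draws bin_gt0.
have [S SRs Smax] := eq_bigmax_cond f Rs_gt0.
exists S; first by move: SRs; rewrite inE => /eqP.
rewrite -card_draws -/Rs mulnC -/(f S) -Smax -sum_nat_const.
apply: (@leq_trans (\sum_(S' in Rs) f S')); last first.
  by apply: leq_sum => S' SRs'; apply: leq_bigmax_cond.
have -> : \sum_(S' in Rs) f S' = \sum_(x in G) \sum_(S' in Rs) (S' \subset B x).
  rewrite exchange_big; apply: eq_bigr => S' _.
  rewrite /f -sum1_card (eq_bigl (fun x => (x \in G) && (S' \subset B x))).
    by rewrite big_mkcondr; apply: eq_bigr => x _; case: (_ \subset _).
  by move=> x; rewrite inE.
rewrite -sum1_card; apply: leq_sum => x xG.
have [|S' [_ S'B S'r]] := exists_card_between (sub0set (B x)) (_ : #|set0| <= r <= _)%N.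
  by rewrite cards0 rich.
by rewrite (bigD1 S') ?inE ?S'r //= S'B.
Qed.

Lemma sum_pred_card (T : finType) (P : pred T) : (\sum_x P x)%N = #|[set x | P x]|.
Proof. by rewrite -sum1dep_card [RHS]big_mkcond; apply: eq_bigr => x _; case: (P x). Qed.

Lemma sum_card_le_rich (I J : finType) (B : J -> {set I}) r :
  (\sum_j #|B j| <= #|J| * r + #|I| * #|[set j | r <= #|B j|]|)%N.
Proof.
rewrite -sum_pred_card -sum_nat_const big_distrr -big_split /=.
apply: leq_sum => j _; case: (leqP r #|B j|) => [_|/ltnW]; rewrite /= ?muln1 ?muln0 ?addn0 //.
exact: leq_trans (max_card _) (leq_addl _ _).
Qed.

Lemma leq_mul_bin k r : (0 < r <= k)%N -> (k <= r * 'C(k, r))%N.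
Proof.
case: r => // r /= ltrk; rewrite -mul_bin_diag leq_pmulr // bin_gt0; lia.
Qed.

Lemma big_nat_blocks (R : Type) (idx : R) (op : Monoid.law idx) k a (h : nat -> R) :
  \big[op/idx]_(0 <= x < k * a) h x =
  \big[op/idx]_(0 <= i < k) \big[op/idx]_(0 <= o < a) h (i * a + o).
Proof.
elim: k => [|k IHk]; first by rewrite mul0n !big_geq.
rewrite big_nat_recr //= -IHk mulSn addnC (big_cat_nat _ (leq_addr _ _)) //=.
congr (op _ _); rewrite -{1}(add0n (k * a)) big_addn addKn.
by apply: eq_bigr => o _; rewrite addnC.
Qed.

Lemma sum_nat_truncated (h : nat -> bool) t A :
  (\sum_(0 <= o < A) (h o && (\sum_(0 <= o' < o) h o' < t)) =
   minn t (\sum_(0 <= o < A) h o))%N.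
Proof.
elim: A => [|A IHA]; first by rewrite !big_geq // minn0.
rewrite !big_nat_recr //= IHA; case: (h A) => /=; last by rewrite !addn0.
by case: ltnP; lia.
Qed.

(* The [j]-th smallest element of [A]; [0] once [j >= #|A|]. *)
Definition enum_nat p (A : {set 'I_p}) (j : nat) : nat :=
  nth 0%N [seq val x | x <- enum A] j.

Section EnumNat.
Variables (p : nat) (A : {set 'I_p}).

Lemma enum_natP j : (j < #|A|)%N -> exists2 x, x \in A & val x = enum_nat A j.
Proof.
move=> ltjA; have : enum_nat A j \in [seq val x | x <- enum A].
  by apply: mem_nth; rewrite size_map -cardE.
by case/mapP=> x; rewrite mem_enum => xA ->; exists x.
Qed.

Lemma enum_nat_lt j : (j < #|A|)%N -> (enum_nat A j < p)%N.
Proof. by case/enum_natP=> x _ <-; apply: ltn_ord. Qed.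

Lemma enum_nat_mono j j' : (j < j' < #|A|)%N -> (enum_nat A j < enum_nat A j')%N.
Proof.
case/andP=> ltjj' ltj'A.
have sorted_A : sorted ltn [seq val x | x <- enum A].
  rewrite -[enum _](eq_filter (mem_enum _)) -(eq_filter (mem_map val_inj _)).
  by rewrite -filter_map (sorted_filter ltn_trans) // unlock val_ord_enum iota_ltn_sorted.
by apply: (sorted_ltn_nth ltn_trans) => //; rewrite inE size_map -cardE // (ltn_trans ltjj').
Qed.

Lemma big_enum_nat (h : nat -> nat) :
  (\sum_(0 <= j < #|A|) h (enum_nat A j) = \sum_(x in A) h x)%N.
Proof.
by rewrite -big_enum -(big_map val xpredT h) [RHS](big_nth 0%N) size_map -cardE.
Qed.

End EnumNat.

Definition increasing_into (a p : nat) (F : nat -> nat) : Prop :=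
  (forall x, x < a -> F x < p)%N /\ (forall x y, x < y < a -> F x < F y)%N.

Lemma increasing_into_enum_nat p (A : {set 'I_p}) : increasing_into #|A| p (enum_nat A).
Proof. by split; [apply: enum_nat_lt | apply: enum_nat_mono]. Qed.

Lemma increasing_into_shift a p i :
  ((i + 1) * a <= p)%N -> increasing_into a p (fun x => i * a + x)%N.
Proof. by move=> le_p; split=> [x|x y]; lia. Qed.

Lemma increasing_into_blocks r k a p (F : nat -> nat) :
  (k * a <= p)%N -> increasing_into r k F ->
  increasing_into (r * a) p (fun x => F (x %/ a) * a + x %% a)%N.
Proof.
move=> le_ka_p [F_lt F_mono].
have [->|a_gt0] := posnP a; first by split=> [x|x y]; rewrite muln0 ?ltn0 ?andbF.
have lt_block z w x : (z < w -> z * a + x %% a < w * a)%N.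
  by move/(leq_mul (leqnn a)); rewrite mulnS; have := ltn_pmod x a_gt0; lia.
have block_lt x : (x < r * a -> x %/ a < r)%N by rewrite ltn_divLR.
split=> [x /block_lt/F_lt ltFk|x y /andP[ltxy /block_lt ltyr]].
  by apply: leq_trans le_ka_p; apply: lt_block.
have := leq_div2r a (ltnW ltxy); rewrite leq_eqVlt => /orP[/eqP eq_div|lt_div].
  by rewrite eq_div ltn_add2l; have := divn_eq x a; have := divn_eq y a; lia.
by apply: leq_trans (leq_addr _ _); apply/lt_block/F_mono; rewrite lt_div.
Qed.

(* Out-of-range entries read as [false], so that submatrices can be described
   by arithmetic on plain natural-number indices. *)
Definition mx_at p q (M : 'M[bool]_(p, q)) (x y : nat) : bool :=
  if (insub x : option 'I_p) is Some i then
    if (insub y : option 'I_q) is Some j then M i j else false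
  else false.

Section NatIndexedMatrices.
Variables (p q : nat) (M : 'M[bool]_(p, q)).

Lemma mx_at_ord (i : 'I_p) (j : 'I_q) : mx_at M i j = M i j.
Proof. by rewrite /mx_at !valK. Qed.

Lemma weight_mx_nat (f : nat -> nat -> bool) :
  weight (\matrix_(i < p, j < q) f i j) = (\sum_(0 <= i < p) \sum_(0 <= j < q) f i j)%N.
Proof.
rewrite /weight -sum1_card big_mkcond /= big_mkord.
under [RHS]eq_bigr do rewrite big_mkord.
rewrite pair_big /=; apply: eq_bigr => -[i j] _; rewrite inE mxE.
by case: (f i j).
Qed.

Lemma weight_mx_at : weight M = (\sum_(0 <= i < p) \sum_(0 <= j < q) mx_at M i j)%N.
Proof.
rewrite -weight_mx_nat; congr weight; apply/matrixP=> i j.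
by rewrite mxE mx_at_ord.
Qed.

Lemma contains_mx_nat a b (f : nat -> nat -> bool) (F G : nat -> nat) :
  increasing_into a p F -> increasing_into b q G ->
  (forall x y, x < a -> y < b -> f x y -> mx_at M (F x) (G y))%N ->
  contains M (\matrix_(x < a, y < b) f x y).
Proof.
move=> [F_lt F_mono] [G_lt G_mono] f_le.
exists (fun x : 'I_a => Ordinal (F_lt x (ltn_ord x))).
exists (fun y : 'I_b => Ordinal (G_lt y (ltn_ord y))).
split; [|split] => [x x'|y y'|x y] /=; rewrite ?mxE.
- by move=> ltxx'; apply: F_mono; rewrite ltxx' /=.
- by move=> ltyy'; apply: G_mono; rewrite ltyy' /=.
- by move/f_le; rewrite -(mx_at_ord (Ordinal _)); apply.
Qed.

End NatIndexedMatrices.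

Lemma block_count_mx_nat r a m (f : nat -> nat -> bool) i (c : 'I_m) :
  (i < r)%N ->
  block_count (\matrix_(x < r * a, y < m) f x y) r i c = (\sum_(0 <= o < a) f (i * a + o) c)%N.
Proof.
move=> ltir; have r_gt0 : (0 < r)%N by exact: leq_ltn_trans ltir.
rewrite /block_count mulKn // -sum1_card big_mkcond /=.
pose g x := ((i * a <= x < i.+1 * a) && f x c : nat)%N.
rewrite (eq_bigr (fun x : 'I_(r * a) => g x)) => [|x _]; last first.
  by rewrite inE mxE /g; case: (_ && _).
rewrite -(big_mkord xpredT g).
rewrite big_nat_blocks (bigD1_seq i) ?mem_index_iota ?iota_uniq //=.
rewrite [X in (_ + X)%N]big1 ?addn0.
  apply: eq_big_nat => o /andP[_ ltoa].
  by rewrite /g mulSn leq_addr [(a + _)%N]addnC ltn_add2l ltoa.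
move=> j neji; rewrite big_nat big1 // => o /andP[_ ltoa]; rewrite /g.
suff /negbTE-> : ~~ (i * a <= j * a + o < i.+1 * a)%N by [].
case: (ltngtP j i) neji => // [ltji|ltij] _.
- by have := leq_mul ltji (leqnn a); rewrite !mulSn; lia.
- by have := leq_mul ltij (leqnn a); rewrite !mulSn; lia.
Qed.

Lemma exists_block_submatrix p q a (M : 'M[bool]_(p, q)) i (A : {set 'I_q}) b :
  ((i + 1) * a <= p)%N -> #|A| = b ->
  exists N : 'M[bool]_(a, b), contains M N /\
    weight N = (\sum_(y in A) \sum_(0 <= o < a) mx_at M (i * a + o) y)%N.
Proof.
move=> le_p <-.
exists (\matrix_(x < a, y < #|A|) mx_at M (i * a + x) (enum_nat A y))%R; split.
  apply: (contains_mx_nat (f := fun x y => mx_at M (i * a + x) (enum_nat A y)))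
    (increasing_into_shift le_p) (increasing_into_enum_nat A) _ => //.
rewrite (weight_mx_nat _ _ (fun x y => mx_at M (i * a + x) (enum_nat A y))) exchange_big_nat /=.
exact: (big_enum_nat A (fun y => \sum_(0 <= o < a) mx_at M (i * a + o) y))%N.
Qed.

Section BalancedTruncation.
Variables (p q k a t : nat) (M : 'M[bool]_(p, q)) (S : {set 'I_k}) (F : {set 'I_q}).
Hypothesis le_ka_p : (k * a <= p)%N.
Hypothesis rich : forall i y, i \in S -> y \in F ->
  (t <= \sum_(0 <= o < a) mx_at M (i * a + o) y)%N.

Let P j o y := mx_at M (enum_nat S j * a + o) (enum_nat F y).
(* A one of block [j] in column [y] is kept while fewer than [t] ones precede it
   there. *)
Let trunc x y := P (x %/ a) (x %% a) y && (\sum_(0 <= o < x %% a) P (x %/ a) o y < t)%N.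
Let N := (\matrix_(x < #|S| * a, y < #|F|) trunc x y)%R.

Lemma block_sum_trunc j y : (j < #|S|)%N -> (y < #|F|)%N ->
  (\sum_(0 <= o < a) trunc (j * a + o) y)%N = t.
Proof.
move=> ltjS ltyF.
rewrite (eq_big_nat _ _ (F2 := fun o => (P j o y && (\sum_(0 <= o' < o) P j o' y < t)%N : nat))).
  rewrite sum_nat_truncated; apply/minn_idPl.
  rewrite /P; by have [i iS <-] := enum_natP ltjS; have [y' y'F <-] := enum_natP ltyF; apply: rich.
move=> o /andP[_ ltoa]; have a_gt0 : (0 < a)%N by exact: leq_ltn_trans ltoa.
by rewrite /trunc divnMDl // (divn_small ltoa) addn0 modnMDl (modn_small ltoa).
Qed.

Lemma contains_trunc : contains M N.
Proof.
apply: (contains_mx_nat (f := trunc)) (increasing_into_blocks le_ka_p (increasing_into_enum_nat S))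
  (increasing_into_enum_nat F) _.
by move=> x y _ _ /andP[].
Qed.

Lemma balanced_trunc : balanced #|S| N.
Proof.
split=> [|y i j ltiS ltjS]; first exact: dvdn_mulr.
by rewrite !block_count_mx_nat // !block_sum_trunc.
Qed.

Lemma weight_trunc : weight N = (#|S| * t * #|F|)%N.
Proof.
rewrite (weight_mx_nat _ _ trunc) exchange_big_nat /= (eq_big_nat _ _ (F2 := fun=> (#|S| * t)%N)).
  by rewrite sum_nat_const_nat subn0 mulnC.
move=> y /andP[_ ltyF]; rewrite big_nat_blocks (eq_big_nat _ _ (F2 := fun=> t)).
  by rewrite sum_nat_const_nat subn0.
by move=> j /andP[_ ltjS]; apply: block_sum_trunc.
Qed.

Lemma exists_balanced_submatrix r : #|S| = r ->
  exists N : 'M[bool]_(r * a, #|F|),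
    [/\ contains M N, balanced r N & weight N = (r * t * #|F|)%N].
Proof.
move=> <-; exists N.
by split; [exact: contains_trunc | exact: balanced_trunc | exact: weight_trunc].
Qed.

End BalancedTruncation.

Local Open Scope ring_scope.

Lemma sum_threshold_split (R : realDomainType) (I J : finType) (D : I -> J -> nat)
    (T : R) (t : nat) :
  0 <= T ->
  (\sum_i \sum_j D i j)%N%:R <=
    \sum_i (\sum_(j | (T <= (D i j)%:R)%R) D i j)%N%:R
    + T * (\sum_j #|[set i | t <= D i j]|)%N%:R + (#|J| * #|I| * t)%N%:R.
Proof.
move=> T_ge0.
have split_ij i j : (D i j)%:R <= (if T <= (D i j)%:R then (D i j)%:R else 0)
    + T * (t <= D i j)%N%:R + t%:R :> R.
  have t_ge0 : 0 <= t%:R :> R by [].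
  case: ifP => [_|/negbT]; [|rewrite -ltNge]; case: leqP => [_|lt_Dt];
    rewrite ?mulr1 ?mulr0; try lra.
  by move=> _; rewrite !add0r ler_nat ltnW.
apply: (@le_trans _ _ (\sum_i \sum_j ((if T <= (D i j)%:R then (D i j)%:R else 0)
    + T * (t <= D i j)%N%:R + t%:R))).
  by rewrite natr_sum; apply: ler_sum => i _; rewrite natr_sum; apply: ler_sum.
rewrite le_eqVlt; apply/predU1l.
under [LHS]eq_bigr do rewrite !big_split /=.
rewrite !big_split /= natr_sum; congr (_ + _ + _).
- by apply: eq_bigr => i _; rewrite natr_sum [RHS]big_mkcond.
- rewrite mulr_sumr exchange_big; apply: eq_bigr => j _.
  by rewrite -mulr_sumr -sum_pred_card natr_sum.
- by rewrite !sumr_const -!mulrnA mulnC.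
Qed.

Lemma rich_columns_bound (R : realFieldType) (r k a u g : R) :
  1 <= r -> 0 < k -> 0 <= a -> 0 < u ->
  16 * r * k * a * u <= 2 * k * a * u + 2 * u * (k * a * r + k * g) + 8 * r * k * a * u ->
  2 * r * a <= g.
Proof.
move=> r_ge1 k_gt0 a_ge0 u_gt0 H; have ku_gt0 : 0 < k * u by rewrite mulr_gt0.
rewrite -(ler_pM2l ku_gt0); have : 0 <= k * u * a * (r - 1) by rewrite !mulr_ge0 ?subr_ge0 // ltW.
nra.
Qed.

Lemma balanced_weight_bound (R : realFieldType) (r s a sa C c t m sm : R) :
  1 <= r -> 1 <= s -> 1 <= a -> 0 <= sa -> sa ^+ 2 = a -> 0 <= t -> 0 <= sm -> sm ^+ 2 = m ->
  256 * r <= C -> 8 * r * s * C <= c -> c * sa < 32 * r * (t + 1) -> 2 * r * a <= m * C ->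
  r * s * sm * (r * a) <= r * t * m.
Proof.
move=> r_ge1 s_ge1 a_ge1 sa_ge0 sa2 t_ge0 sm_ge0 sm2 C_ge c_ge t_gt C_m.
have sa_ge1 : 1 <= sa by nra.
have sC_ge : 256 <= s * C by nra.
have sCsa_ge : 256 <= s * C * sa by nra.
have sCsa_le : s * C * sa <= 8 * t.
  have : 8 * r * (s * C * sa) < 8 * r * (4 * (t + 1)) by nra.
  by rewrite ltr_pM2l; nra.
have sq : (s * C) ^+ 2 * a <= 64 * t ^+ 2 by rewrite -sa2 -exprMn; nra.
have m_ge0 : 0 <= m by rewrite -sm2 sqr_ge0.
have s2a_ge0 : 0 <= s ^+ 2 * a by rewrite mulr_ge0 ?sqr_ge0 //; lra.
(* (8 t)^2 m >= (s C sa)^2 m >= s^2 C a (2 r a) >= 512 (r s a)^2 *)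
have rsa_le : r * s * a <= t * sm.
  rewrite -ler_sqr ?nnegrE ?mulr_ge0 //; try lra.
  rewrite [in X in _ <= X]exprMn sm2.
  have := ler_wpM2r m_ge0 sq.
  have : s ^+ 2 * a * C * (2 * r * a) <= s ^+ 2 * a * C * (m * C).
    by rewrite ler_wpM2l // mulr_ge0 //; lra.
  have : s ^+ 2 * a * (2 * r * a) * (256 * r) <= s ^+ 2 * a * (2 * r * a) * C.
    by rewrite ler_wpM2l // !mulr_ge0 //; lra.
  nra.
rewrite -sm2 (_ : r * s * sm * (r * a) = r * sm * (r * s * a)); last by ring.
rewrite (_ : r * t * sm ^+ 2 = r * sm * (t * sm)); last by ring.
by rewrite ler_wpM2l // mulr_ge0 //; lra.
Qed.

Section Dichotomy.
Variables (R : realType) (r s k a n : nat) (c : R) (M : 'M[bool]_(n, n)).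
Hypotheses (r_gt0 : (0 < r)%N) (s_gt0 : (0 < s)%N) (k_def : k = (2 ^ 8 * r ^ 2)%N).
Hypothesis c_ge : (8 * r * s * 'C(k, r))%:R <= c.
Hypothesis n_def : n = (k * a)%N.
Hypothesis weight_ge : c * (n%:R * Num.sqrt n%:R) <= (weight M)%:R.

Let D (i : 'I_k) (y : 'I_n) : nat := (\sum_(0 <= o < a) mx_at M (i * a + o) y)%N.
Let sa := Num.sqrt (a%:R : R).
Let u := c * sa.

Let square_outcome := exists N : 'M[bool]_(a, a),
  contains M N /\ 2%:R * c * (a%:R * sa) <= (weight N)%:R.
Let balanced_outcome := exists (m : nat) (N : 'M[bool]_(r * a, m)),
  (0 < m)%N /\ contains M N /\ balanced r N /\
  (r * s)%:R * Num.sqrt (m%:R : R) * (r * a)%:R <= (weight N)%:R.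

Let k_gt0 : (0 < k)%N. Proof. by rewrite k_def; lia. Qed.
Let r_le_k : (r <= k)%N. Proof. by rewrite k_def; nia. Qed.

Let c_gt0 : 0 < c.
Proof.
by apply: lt_le_trans c_ge; rewrite ltr0n !muln_gt0 r_gt0 s_gt0 bin_gt0 r_le_k.
Qed.

Lemma weight_block_sums : weight M = (\sum_(i < k) \sum_(y < n) D i y)%N.
Proof.
rewrite weight_mx_at [X in index_iota 0 X]n_def big_nat_blocks big_mkord.
apply: eq_bigr => i _; rewrite exchange_big_nat -n_def big_mkord.
by apply: eq_bigr.
Qed.

Let k_R : k%:R = 256 * r%:R ^+ 2 :> R.
Proof. by rewrite k_def natrM natrX; ring. Qed.

Let sqrt_n : Num.sqrt n%:R = 16 * r%:R * sa.
Proof.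
rewrite n_def natrM k_R (_ : 256 * r%:R ^+ 2 = (16 * r%:R) ^+ 2); last by ring.
by rewrite sqrtrM ?sqr_ge0 // sqrtr_sqr ger0_norm // mulr_ge0.
Qed.

Lemma square_outcome_of_dense_block (i : 'I_k) (A : {set 'I_n}) : #|A| = a ->
  2%:R * c * (a%:R * sa) <= (\sum_(y in A) D i y)%N%:R -> square_outcome.
Proof.
move=> card_A dense; have le_n : ((i + 1) * a <= n)%N.
  by rewrite n_def leq_mul2r addn1 ltn_ord orbT.
by have [N [contN wN]] := exists_block_submatrix M le_n card_A; exists N; rewrite wN.
Qed.

Section Sparse.
Hypothesis sparse : forall (i : 'I_k) (A : {set 'I_n}), #|A| = a ->
  (\sum_(y in A) D i y)%N%:R < 2%:R * c * (a%:R * sa).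

Let a_gt0 : (0 < a)%N.
Proof.
rewrite lt0n; apply/eqP=> a0; have := @sparse (Ordinal k_gt0) set0.
by rewrite cards0 a0 big_set0 mul0r mulr0 ltxx => /(_ erefl).
Qed.

Lemma heavy_columns_sum_le (i : 'I_k) :
  (\sum_(y | (2 * u <= (D i y)%:R)%R) D i y)%N%:R <= 2%:R * c * (a%:R * sa).
Proof.
set L := [set y | 2 * u <= (D i y)%:R].
rewrite (eq_bigl (fun y => y \in L)) => [|y]; last by rewrite inE.
have [le_a_L|lt_L_a] := leqP a #|L|.
  have [|A [_ sAL card_A]] := exists_card_between (sub0set L) (_ : #|set0| <= a <= _)%N.
    by rewrite cards0.
  have := sparse i card_A; rewrite ltNge => /negP[]; rewrite natr_sum.
  apply: le_trans (_ : \sum_(y in A) 2 * u <= _).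
    by rewrite sumr_const card_A /u -mulr_natr le_eqVlt; apply/predU1l; ring.
  by apply: ler_sum => y /(subsetP sAL); rewrite inE.
have [|A [sLA _ card_A]] := exists_card_between (subsetT L) (_ : #|L| <= a <= _)%N.
  by rewrite ltnW //= cardsT card_ord n_def leq_pmull.
apply/ltW/(le_lt_trans _ (sparse i card_A)); rewrite ler_nat.
rewrite [X in (X <= _)%N]big_mkcond [X in (_ <= X)%N]big_mkcond leq_sum // => y _.
by case: ifP => // /(subsetP sLA) ->.
Qed.

Let t := Num.truncn (u / (32 * r%:R)).
Let B (y : 'I_n) := [set i | (t <= D i y)%N].
Let G := [set y | (r <= #|B y|)%N].

Let u_gt0 : 0 < u. Proof. by rewrite mulr_gt0 // sqrtr_gt0 ltr0n. Qed.

Let t_bounds : t%:R * (32 * r%:R) <= u < (t + 1)%:R * (32 * r%:R).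
Proof.
have r_gt0' : 0 < 32 * r%:R :> R by rewrite mulr_gt0 // ltr0n.
rewrite -ler_pdivlMr // -ltr_pdivrMr // addn1.
by apply: truncn_itv; rewrite divr_ge0 // ltW.
Qed.

Lemma weight_upper_bound : (weight M)%:R <= 2 * k%:R * a%:R * u
  + 2 * u * (k%:R * a%:R * r%:R + k%:R * #|G|%:R) + 8 * r%:R * k%:R * a%:R * u.
Proof.
have two_u_gt0 : 0 < 2 * u by rewrite mulr_gt0.
rewrite weight_block_sums.
apply: le_trans (sum_threshold_split D t (ltW two_u_gt0)) _.
rewrite !card_ord; apply: lerD; first apply: lerD.
- apply: le_trans (ler_sum _ (fun i _ => heavy_columns_sum_le i)) _.
  by rewrite sumr_const card_ord -mulr_natr /u le_eqVlt; apply/predU1l; ring.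
- rewrite (ler_pM2l two_u_gt0) -!natrM -natrD ler_nat -n_def.
  by have := sum_card_le_rich B r; rewrite !card_ord.
- have /andP[t_le _] := t_bounds.
  have kar_ge0 : 0 <= 8 * r%:R * k%:R * a%:R :> R by rewrite !mulr_ge0.
  apply: le_trans (ler_wpM2l kar_ge0 t_le); rewrite le_eqVlt; apply/predU1l.
  by rewrite n_def !natrM k_R; ring.
Qed.

Lemma many_rich_columns : (2 * r * a <= #|G|)%N.
Proof.
rewrite -(ler_nat R) !natrM.
apply: (rich_columns_bound (k := k%:R) (u := u)); rewrite ?ler1n ?ltr0n //.
apply: le_trans weight_upper_bound; apply: le_trans weight_ge; rewrite le_eqVlt; apply/predU1l.
by rewrite sqrt_n n_def natrM /u; ring.
Qed.

Lemma balanced_outcome_holds : balanced_outcome.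
Proof.
have rich_G : {in G, forall y, r <= #|B y|}%N by move=> y; rewrite inE.
have r_le : (r <= #|'I_k|)%N by rewrite card_ord.
have [S card_S FG] := exists_common_subset r_le rich_G.
set F := [set y in G | S \subset B y] in FG.
have rich i y : i \in S -> y \in F -> (t <= D i y)%N.
  by move=> iS; rewrite inE => /andP[_ /subsetP/(_ i iS)]; rewrite inE.
have le_ka_n : (k * a <= n)%N by rewrite n_def.
have [N [contN balN wN]] := exists_balanced_submatrix le_ka_n rich card_S.
have rich_G_le : (2 * r * a <= #|F| * 'C(k, r))%N.
  by apply: leq_trans many_rich_columns _; rewrite card_ord in FG.
have C_ge : (256 * r <= 'C(k, r))%N.
  have := @leq_mul_bin k r; rewrite r_gt0 r_le_k => /(_ isT).
  by rewrite [X in (X <= _)%N]k_def; nia.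
exists #|F|, N; rewrite wN; split.
  by rewrite lt0n; apply: contraTneq rich_G_le => ->; rewrite mul0n -ltnNge !muln_gt0 r_gt0 a_gt0.
do 2!split=> //; rewrite !natrM.
apply: (balanced_weight_bound (sa := sa) (C := 'C(k, r)%:R) (c := c)).
all: rewrite ?ler1n ?sqrtr_ge0 ?sqr_sqrtr -?natrM ?ler_nat //.
by have /andP[_] := t_bounds; rewrite natrM natrD mulrC.
Qed.

End Sparse.

Lemma square_or_balanced_outcome : square_outcome \/ balanced_outcome.
Proof.
case: (boolP [exists i : 'I_k, exists A : {set 'I_n},
  (#|A| == a) && (2%:R * c * (a%:R * sa) <= (\sum_(y in A) D i y)%N%:R)]).
  case/existsP=> i /existsP[A /andP[/eqP card_A dense]].
  by left; apply: square_outcome_of_dense_block dense.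
rewrite negb_exists => /forallP sparse; right; apply: balanced_outcome_holds => i A card_A.
by move: (sparse i); rewrite negb_exists => /forallP/(_ A); rewrite card_A eqxx -ltNge.
Qed.

End Dichotomy.

Theorem lemma5p4 (R : realType) (r s k : nat) (c : R) (n : nat)
    (M : 'M[bool]_(n, n)) :
  (0 < r)%N -> (0 < s)%N ->
  k = (2 ^ 8 * r ^ 2)%N ->
  (8 * r * s * 'C(k, r))%:R <= c ->
  (k %| n)%N ->
  c * (n%:R * Num.sqrt (n%:R : R)) <= (weight M)%:R ->
  (exists N : 'M[bool]_(n %/ k, n %/ k),
      contains M N /\
      2%:R * c * ((n %/ k)%:R * Num.sqrt ((n %/ k)%:R : R)) <= (weight N)%:R)
  \/
  (exists (m : nat) (N : 'M[bool]_(r * (n %/ k), m)),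
      (0 < m)%N /\ contains M N /\ balanced r N /\
      (r * s)%:R * Num.sqrt (m%:R : R) * (r * (n %/ k))%:R <= (weight N)%:R).
Proof.
move=> r_gt0 s_gt0 k_def c_ge k_dvd_n.
have n_def : n = (k * (n %/ k))%N by rewrite mulnC divnK.
exact: square_or_balanced_outcome r_gt0 s_gt0 k_def c_ge n_def.
Qed.
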